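(* Let $\{(Y_i,X_i^T)\}_{i=1}^n$ be i.i.d. copies of $(Y,X^T)$, where $Y$ is real-valued and $X$ takes values in a support $\mathcal{X}\subset\mathbb{R}^{\dim X}$, and let $g_0(x)=E[Y\mid X=x]$. Let $\mathbf{A}_0$ be a known linear operator mapping functions on $\mathcal{X}$ to real-valued functions on a set $\mathcal{W}_0$, and $\mathbf{A}_1$ a known linear operator mapping functions on $\mathcal{X}$ to real-valued functions on a set $\mathcal{W}_1$; put $\theta_0=\mathbf{A}_0g_0$. Let $p_{1:k}=(p_1,\dots,p_k)^T$ be functions on $\mathcal{X}$ ($k\ge 2$), assume $E[p_{1:k}(X)p_{1:k}(X)^T]$ is invertible, and let $\bar\beta=E[p_{1:k}(X)p_{1:k}(X)^T]^{-1}E[p_{1:k}(X)Y]$. Assume there are known functions $\delta_0$ on $\mathcal{W}_0$ and $\delta_1$ on $\mathcal{W}_1$ with $|[\mathbf{A}_0(g_0-p_{1:k}^T\bar\beta)](w_0)|\le\delta_0(w_0)$ for all $w_0\in\mathcal{W}_0$ and $|[\mathbf{A}_1(g_0-p_{1:k}^T\bar\beta)](w_1)|\le\delta_1(w_1)$ for all $w_1\in\mathcal{W}_1$. Define $\hat\omega=p_{1:k}(X)\bigl(Y-p_{1:k}(X)^TE_n[p_{1:k}(X)p_{1:k}(X)^T]^{-1}E_n[p_{1:k}(X)Y]\bigr)$ (computed for each observation), let $\eta_1,\dots,\eta_n$ be i.i.d. Rademacher variables independent of the data, and let $cv$ be the $(1-\alpha)$ quantile, conditional on the data, of $\|E_n[\hat\omega\hat\omega^T]^{-1/2}E_n[\eta\hat\omega]\|_\infty$.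 Consider the constraints on $\beta\in\mathbb{R}^k$: (C1) $\|E_n[\hat\omega\hat\omega^T]^{-1/2}E_n[p_{1:k}(X)(Y-p_{1:k}(X)^T\beta)]\|_\infty\le cv$; (C3) $[\mathbf{A}_1p_{1:k}^T](w_1)\beta\le\delta_1(w_1)$ for every $w_1\in\mathcal{W}_1$; and let $CR_\theta$ be the set of functions $\theta:\mathcal{W}_0\to\mathbb{R}$ for which there exists $\beta\in\mathbb{R}^k$ satisfying (C1), (C3), and $|[\mathbf{A}_0p_{1:k}^T](w_0)\beta-\theta(w_0)|\le\delta_0(w_0)$ for every $w_0\in\mathcal{W}_0$. Then for every $w_0\in\mathcal{W}_0$, the projection $\{\theta(w_0):\theta\in CR_\theta\}$ equals the closed interval $$\Bigl[\min_{\beta\ \text{s.t. (C1),(C3)}}[\mathbf{A}_0p_{1:k}^T](w_0)\beta-\delta_0(w_0),\ \max_{\beta\ \text{s.t. (C1),(C3)}}[\mathbf{A}_0p_{1:k}^T](w_0)\beta+\delta_0(w_0)\Bigr].$$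
   Context: $E_n$ denotes the sample mean: $E_n[f(Y,X^T)]=\frac1n\sum_{i=1}^nf(Y_i,X_i^T)$, and $E_n[\eta\hat\omega]=\frac1n\sum_i\eta_i\hat\omega_i$. The notation $[\mathbf{A}_jp_{1:k}^T](w)\beta$ means $[\mathbf{A}_j(p_{1:k}^T\beta)](w)$ for $j=0,1$. $\|\cdot\|_\infty$ is the sup-norm of a vector in $\mathbb{R}^k$. The constraints (C1) and (C3) are linear in $\beta$, so the endpoints are values of linear programs. *)

From HB Require Import structures.
From mathcomp Require Import all_boot all_order all_algebra.
From mathcomp Require Import reals.
Set Implicit Arguments. Unset Strict Implicit. Unset Printing Implicit Defensive.
Import Order.TTheory GRing.Theory Num.Theory.
Local Open Scope ring_scope.

Section Defs.
Variable R : realType.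

Definition linop (D W : Type) (A : (D -> R) -> (W -> R)) : Prop :=
  forall (a : R) (f g : D -> R) (w : W),
    A (fun x => a * f x + g x) w = a * A f w + A g w.

(* A operates on functions on the support Xsup: it only depends on values on Xsup. *)
Definition on_support (D W : Type) (Xsup : D -> Prop)
  (A : (D -> R) -> (W -> R)) : Prop :=
  forall f g : D -> R, (forall x, Xsup x -> f x = g x) -> A f = A g.

Definition supnorm k (v : 'cV[R]_k) : R := \big[Num.max/0]_(i < k) `|v i 0|.

Definition pvec D k (p : 'I_k -> D -> R) (x : D) : 'cV[R]_k := \col_i p i x.

Definition pfun D k (p : 'I_k -> D -> R) (beta : 'cV[R]_k) : D -> R :=
  fun x => \sum_(j < k) p j x * beta j 0.

Definition En n (f : 'I_n -> R) : R := n%:R^-1 * \sum_(i < n) f i.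
Definition Enmx n r c (F : 'I_n -> 'M[R]_(r, c)) : 'M[R]_(r, c) :=
  n%:R^-1 *: \sum_(i < n) F i.

Definition is_inv_sqrt k (S M : 'M[R]_k) : Prop :=
  S^T = S /\ (forall v : 'cV[R]_k, v != 0 -> 0 < (v^T *m S *m v) 0 0)
  /\ S *m S *m M = 1%:M.

Definition rsign (b : bool) : R := if b then 1 else -1.

(* (1 - alpha) quantile of the law of stat(eta), eta uniform on {-1,1}^n *)
Definition rad_cdf n (stat : {ffun 'I_n -> bool} -> R) (c : R) : R :=
  #|[set eta : {ffun 'I_n -> bool} | stat eta <= c]|%:R / (2 ^+ n).

Definition is_quantile n (stat : {ffun 'I_n -> bool} -> R) (q alpha : R) : Prop :=
  1 - alpha <= rad_cdf stat q /\
  forall c, 1 - alpha <= rad_cdf stat c -> q <= c.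

Definition is_min_val (B : Type) (F : B -> Prop) (f : B -> R) (m : R) : Prop :=
  (exists2 b, F b & f b = m) /\ (forall b, F b -> m <= f b).
Definition is_max_val (B : Type) (F : B -> Prop) (f : B -> R) (m : R) : Prop :=
  (exists2 b, F b & f b = m) /\ (forall b, F b -> f b <= m).

End Defs.

From HB Require Import structures.
From mathcomp Require Import all_boot all_order all_algebra.
From mathcomp Require Import reals boolp.
From mathcomp Require Import ring lra.
Set Implicit Arguments. Unset Strict Implicit. Unset Printing Implicit Defensive.
Import Order.TTheory GRing.Theory Num.Theory.
Local Open Scope ring_scope.

(** The set of coefficient vectors satisfying (C1) and (C3) is convex: (C1)
    is a sublevel set of the sup-norm composed with a map affine in [beta],
    and (C3) is an intersection of half-spaces.  Its image under the linear
    functional [beta |-> [A0 p^T](w0) beta] is therefore the whole interval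
    between the attained minimum and maximum.  A value [t] is then the value
    at [w0] of some [theta] in [CR] exactly when it lies within [delta0 w0] of
    that interval: away from [w0] one may take [theta] equal to
    [A0 (p^T beta)] itself. *)

Section Convexity.
Variable R : realType.

Definition convex_pred {V : lmodType R} (F : V -> Prop) : Prop :=
  forall l, 0 <= l <= 1 -> forall a b, F a -> F b -> F ((1 - l) *: a + l *: b).

Definition convex_fun {V : lmodType R} (f : V -> R) : Prop :=
  forall l, 0 <= l <= 1 -> forall a b,
    f ((1 - l) *: a + l *: b) <= (1 - l) * f a + l * f b.

Definition affine_fun {V : lmodType R} (f : V -> R) : Prop :=
  forall l a b, f ((1 - l) *: a + l *: b) = (1 - l) * f a + l * f b.

Definition affine_map {V U : lmodType R} (h : V -> U) : Prop :=
  forall l a b, h ((1 - l) *: a + l *: b) = (1 - l) *: h a + l *: h b.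

Lemma convex_fun_comp (U V : lmodType R) (f : U -> R) (h : V -> U) :
  convex_fun f -> affine_map h -> convex_fun (f \o h).
Proof. by move=> cf ah l l01 a b /=; rewrite ah; apply: cf. Qed.

Section OnSpace.
Variable V : lmodType R.

Lemma convex_predI (F G : V -> Prop) :
  convex_pred F -> convex_pred G -> convex_pred (fun v => F v /\ G v).
Proof. by move=> cF cG l l01 a b [Fa Ga] [Fb Gb]; split; [apply: cF | apply: cG]. Qed.

Lemma convex_pred_forall (I : Type) (F : I -> V -> Prop) :
  (forall i, convex_pred (F i)) -> convex_pred (fun v => forall i, F i v).
Proof. by move=> cF l l01 a b Fa Fb i; apply: cF. Qed.

Lemma convex_fun_le (f : V -> R) (c : R) :
  convex_fun f -> convex_pred (fun v => f v <= c).
Proof.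
move=> cf l /andP[l0 l1] a b fa fb; apply: le_trans (cf l _ a b) _; first lra.
have : (1 - l) * f a <= (1 - l) * c by apply: ler_wpM2l; lra.
have : l * f b <= l * c by apply: ler_wpM2l.
lra.
Qed.

Lemma affine_fun_convex (f : V -> R) : affine_fun f -> convex_fun f.
Proof. by move=> af l _ a b; rewrite af. Qed.

Lemma affine_image_itv (F : V -> Prop) (f : V -> R) (a b : V) (s : R) :
  convex_pred F -> affine_fun f -> F a -> F b -> f a <= s <= f b ->
  exists2 c, F c & f c = s.
Proof.
move=> cF af Fa Fb /andP[as_ sb].
have [eab | ltab] := eqVneq (f a) (f b).
  by exists a => //; apply/eqP; rewrite eq_le as_ eab sb.
have gap : 0 < f b - f a by rewrite subr_gt0 lt_neqAle ltab (le_trans as_ sb).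
pose l := (s - f a) / (f b - f a).
have l01 : 0 <= l <= 1.
  by rewrite divr_ge0 ?ler_pdivrMr //=; lra.
exists ((1 - l) *: a + l *: b); first exact: cF.
have hl : l * (f b - f a) = s - f a by rewrite divfK // gt_eqF.
rewrite af; lra.
Qed.

Lemma affine_image_band (F : V -> Prop) (f : V -> R) (lo hi delta t : R) :
  convex_pred F -> affine_fun f -> is_min_val F f lo -> is_max_val F f hi ->
  0 <= delta ->
  (exists2 b, F b & `|f b - t| <= delta) <-> lo - delta <= t <= hi + delta.
Proof.
move=> cF af [[blo Flo flo] lo_min] [[bhi Fhi fhi] hi_max] delta0; split.
  move=> [b Fb]; rewrite ler_norml => /andP[h1 h2].
  by have := lo_min b Fb; have := hi_max b Fb; move=> *; apply/andP; split; lra.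
move=> /andP[t_lo t_hi].
have lohi : lo <= hi by rewrite -fhi lo_min.
have [s s_itv ts] : exists2 s, lo <= s <= hi & `|s - t| <= delta.
  have [tlo | lot] := lerP t lo; first by exists lo; rewrite ?lexx ?lohi ?ler_norml //; lra.
  have [hit | thi] := lerP hi t; first by exists hi; rewrite ?lexx ?lohi ?ler_norml //; lra.
  by exists t; rewrite ?subrr ?normr0 //; apply/andP; split; apply: ltW.
rewrite -flo -fhi in s_itv.
by have [c Fc fc] := affine_image_itv cF af Flo Fhi s_itv; exists c; rewrite // fc.
Qed.

End OnSpace.

End Convexity.

Lemma band_eval (R : numDomainType) (B W : Type) (P Q : B -> Prop)
    (g : B -> W -> R) (delta : W -> R) (w0 : W) (t : R) :
  (forall w, 0 <= delta w) ->
  (exists2 theta : W -> R,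
      exists b, [/\ P b, Q b & forall w, `|g b w - theta w| <= delta w]
    & theta w0 = t)
  <-> (exists2 b, P b /\ Q b & `|g b w0 - t| <= delta w0).
Proof.
move=> delta_ge0; split.
  by move=> [theta [b [Pb Qb near]] <-]; exists b; [split | apply: near].
move=> [b [Pb Qb] near_t].
exists (fun w => if pselect (w = w0) then t else g b w); last first.
  by destruct (pselect (w0 = w0)).
exists b; split=> // w.
by destruct (pselect (w = w0)); [subst w | rewrite subrr normr0].
Qed.

Section SieveModel.
Variable R : realType.

Lemma supnorm_le k (v : 'cV[R]_k) (c : R) :
  (supnorm v <= c) <-> (0 <= c /\ forall i, `|v i 0| <= c).
Proof.
split; first by move/bigmax_leP => [c0 vc]; split=> // i; apply: vc.
by move=> [c0 vc]; apply/bigmax_leP; split=> // i _; apply: vc.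
Qed.

Lemma supnorm_ge0 k (v : 'cV[R]_k) : 0 <= supnorm v.
Proof. by have /supnorm_le[] := lexx (supnorm v). Qed.

Lemma supnorm_convex k : convex_fun (@supnorm R k).
Proof.
move=> l /andP[l0 l1] u v; apply/supnorm_le; split.
  by have := supnorm_ge0 u; have := supnorm_ge0 v; nra.
move=> i; rewrite !mxE; apply: le_trans (ler_normD _ _) _.
rewrite !normrM (ger0_norm l0) ger0_norm; last lra.
have /supnorm_le[_ /(_ i) ui] := lexx (supnorm u).
have /supnorm_le[_ /(_ i) vi] := lexx (supnorm v).
have : (1 - l) * `|u i 0| <= (1 - l) * supnorm u by apply: ler_wpM2l; lra.
have : l * `|v i 0| <= l * supnorm v by apply: ler_wpM2l.
lra.
Qed.

Lemma moment_affine n k (S : 'M[R]_k) (y : 'I_n -> R) (x : 'I_n -> 'cV[R]_k) :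
  affine_map (fun beta : 'cV[R]_k =>
    S *m Enmx (fun i => (y i - ((x i)^T *m beta) 0 0) *: x i)).
Proof.
move=> l b1 b2; rewrite !scalemxAr -mulmxDr; congr (_ *m _).
rewrite /Enmx !scalerA [(1 - l) * _]mulrC [l * _]mulrC -!scalerA -scalerDr.
congr (_ *: _); rewrite !scaler_sumr -big_split; apply: eq_bigr => i _ /=.
rewrite !scalerA -scalerDl mulmxDr -!scalemxAr !mxE; congr (_ *: _); ring.
Qed.

Lemma linop_comb (D W : Type) (A : (D -> R) -> W -> R) :
  linop A -> forall a b f g w,
  A (fun x => a * f x + b * g x) w = a * A f w + b * A g w.
Proof.
move=> hA a b f g w.
have A0 : A (fun _ => 0) w = 0.
  have := hA 1 (fun _ => 0) (fun _ => 0) w; rewrite mul1r addr0 mul1r => h.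
  by apply: (addrI (A (fun _ => 0) w)); rewrite addr0 -h.
rewrite hA; congr (_ + _).
have -> : (fun x => b * g x) = (fun x => b * g x + (fun _ => 0) x).
  by apply: funext => x; rewrite addr0.
by rewrite hA A0 addr0.
Qed.

Lemma pfunD D k (p : 'I_k -> D -> R) (a b : R) (b1 b2 : 'cV[R]_k) :
  pfun p (a *: b1 + b *: b2) = (fun x => a * pfun p b1 x + b * pfun p b2 x).
Proof.
apply: funext => x; rewrite /pfun !mulr_sumr -big_split /=.
by apply: eq_bigr => j _; rewrite !mxE; ring.
Qed.

Lemma linop_pfun_affine D W k (A : (D -> R) -> W -> R) (p : 'I_k -> D -> R) (w : W) :
  linop A -> affine_fun (fun beta : 'cV[R]_k => A (pfun p beta) w).
Proof. by move=> hA l b1 b2; rewrite pfunD linop_comb. Qed.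

End SieveModel.

Theorem theorem1
  (R : realType) (d n k : nat) (hk : (2 <= k)%N) (hn : (0 < n)%N)
  (Xsup : 'rV[R]_d -> Prop)
  (Ys : 'I_n -> R) (Xs : 'I_n -> 'rV[R]_d) (hXs : forall i, Xsup (Xs i))
  (W0 W1 : Type)
  (A0 : ('rV[R]_d -> R) -> (W0 -> R)) (A1 : ('rV[R]_d -> R) -> (W1 -> R))
  (hA0 : linop A0) (hA1 : linop A1)
  (hA0s : on_support Xsup A0) (hA1s : on_support Xsup A1)
  (p : 'I_k -> 'rV[R]_d -> R)
  (g0 : 'rV[R]_d -> R) (betabar : 'cV[R]_k)
  (delta0 : W0 -> R) (delta1 : W1 -> R)
  (hbias0 : forall w0, `|A0 (fun x => g0 x - pfun p betabar x) w0| <= delta0 w0)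
  (hbias1 : forall w1, `|A1 (fun x => g0 x - pfun p betabar x) w1| <= delta1 w1)
  (hG : Enmx (fun i => pvec p (Xs i) *m (pvec p (Xs i))^T) \in unitmx)
  (S : 'M[R]_k) (alpha cv : R) (halpha : 0 < alpha < 1) :
  let G := Enmx (fun i => pvec p (Xs i) *m (pvec p (Xs i))^T) in
  let bY := Enmx (fun i => Ys i *: pvec p (Xs i)) in
  let omega := fun i : 'I_n =>
    (Ys i - ((pvec p (Xs i))^T *m (invmx G *m bY)) 0 0) *: pvec p (Xs i) in
  let Omega := Enmx (fun i => omega i *m (omega i)^T) in
  let stat := fun eta : {ffun 'I_n -> bool} =>
    supnorm (S *m Enmx (fun i => rsign R (eta i) *: omega i)) in
  is_inv_sqrt S Omega ->
  is_quantile stat cv alpha ->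
  let C1 := fun beta : 'cV[R]_k =>
    supnorm (S *m Enmx (fun i =>
      (Ys i - ((pvec p (Xs i))^T *m beta) 0 0) *: pvec p (Xs i))) <= cv in
  let C3 := fun beta : 'cV[R]_k =>
    forall w1, A1 (pfun p beta) w1 <= delta1 w1 in
  let CR := fun theta : W0 -> R =>
    exists beta, [/\ C1 beta, C3 beta &
      forall w0, `|A0 (pfun p beta) w0 - theta w0| <= delta0 w0] in
  forall (w0 : W0) (lo hi : R),
    is_min_val (fun beta => C1 beta /\ C3 beta) (fun beta => A0 (pfun p beta) w0) lo ->
    is_max_val (fun beta => C1 beta /\ C3 beta) (fun beta => A0 (pfun p beta) w0) hi ->
    forall t : R,
      (exists2 theta, CR theta & theta w0 = t) <->
      (lo - delta0 w0 <= t <= hi + delta0 w0).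
Proof.
move=> G bY omega Omega stat _ _ C1 C3 CR w0 lo hi hlo hhi t.
have delta0_ge0 w : 0 <= delta0 w by apply: le_trans (hbias0 w).
have C1_convex : convex_pred C1.
  apply: convex_fun_le.
  exact: convex_fun_comp (@supnorm_convex R k) (moment_affine S Ys _).
have C3_convex : convex_pred C3.
  apply: convex_pred_forall => w1.
  exact/convex_fun_le/affine_fun_convex/linop_pfun_affine.
exact (iff_trans (band_eval C1 C3 (fun b => A0 (pfun p b)) w0 t delta0_ge0)
  (affine_image_band t (convex_predI C1_convex C3_convex)
     (linop_pfun_affine p w0 hA0) hlo hhi (delta0_ge0 w0))).
Qed.
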